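(* Let $\mathbf{k}$ be a field, let $d \geq 1$, let $A = \mathbf{k}^{d}$ (the product of $d$ copies of $\mathbf{k}$, with componentwise operations and unit $1_A = (1,\dots,1)$), let $M$ be a finite-dimensional $\mathbf{k}$-vector space, and let $\phi : A \to \mathrm{End}_{\mathbf{k}}(M)$ be a $\mathbf{k}$-linear map. Let $n > 2$ be a natural number and assume that $\mathbf{k}$ contains $n$ distinct $n$-th roots of unity (equivalently, $\mathbf{k}$ contains a primitive $n$-th root of unity). If $\phi(1_A) = \mathrm{id}_M$ and for every $a \in A$ with $a^n = 1_A$ we have $\phi(a)^n = \mathrm{id}_M$, then $\phi$ is a (unital) $\mathbf{k}$-algebra homomorphism. *)

From mathcomp Require Import all_boot all_algebra.
Set Implicit Arguments.
Unset Strict Implicit.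
Unset Printing Implicit Defensive.
Import GRing.Theory.
Local Open Scope ring_scope.

(* A = k^d is modelled as {ffun 'I_d -> k} with its pointwise ring structure
   (unit = [ffun => 1]); M is modelled as k^m (row vectors) and End_k(M) as
   'M[k]_m acting on the right. *)

Definition klinear (k : fieldType) (d m : nat)
  (phi : {ffun 'I_d -> k} -> 'M[k]_m) : Prop :=
  (forall a b : {ffun 'I_d -> k}, phi (a + b) = phi a + phi b) /\
  (forall (c : k) (a : {ffun 'I_d -> k}), phi [ffun i => c * a i] = c *: phi a).

From mathcomp Require Import all_boot all_algebra.
From mathcomp Require Import zify.
Import GRing.Theory.
Local Open Scope ring_scope.

(* Put P_i = phi(e_i); then phi(a) = sum_i a_i P_i, and phi is multiplicative
   as soon as the P_i are orthogonal idempotents.  If x and y commute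
   and (z^j x + y)^n does not depend on j < n, then discrete Fourier inversion
   over the powers of the primitive root z (n is invertible in k) shows that
   every middle binomial term y^(n-l) x^l 'C(n, l) vanishes.  For x = Q a
   partial sum of the P_i and y = 1 - Q this gives
   (1 - Q)^(n-1) Q = 0 = (1 - Q) Q^(n-1), hence Q^2 = Q.  Idempotence of P_i, P_j and P_i + P_j makes P_i and P_j
   commute, and inverting once more on E = P_i P_j, which absorbs both, shows
   that (z - 1) E = 0. *)

Section Idempotents.
Context {R : pzRingType}.

Lemma idempotent_expS (e : R) m : e * e = e -> e ^+ m.+1 = e.
Proof. by move=> ee; elim: m => [|m IHm]; rewrite ?expr1 // exprS IHm ee. Qed.

Lemma idempotent_addr_comm (e f : R) :
  e * e = e -> f * f = f -> (e + f) * (e + f) = e + f -> e * f = f * e.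
Proof.
move=> ee ff eff.
have anti : e * f + f * e = 0.
  apply: (addrI (e + f)); rewrite addr0 -[RHS]eff mulrDl !mulrDr ee ff.
  by rewrite addrACA [f + _]addrC.
have := congr1 (fun x => e * x) anti; rewrite mulrDr mulr0 mulrA ee mulrA.
move=> /eqP; rewrite addr_eq0 => /eqP ->.
have := congr1 (fun x => x * e) anti; rewrite mulrDl mul0r -[f * e * e]mulrA ee.
by move=> /eqP; rewrite addrC addr_eq0 => /eqP ->.
Qed.

Lemma comm_sum1_mulr_eq0 {x y : R} {a b : nat} : GRing.comm x y -> x + y = 1 ->
  y ^+ a.+1 * x = 0 -> y * x ^+ b.+1 = 0 -> y * x = 0.
Proof.
move=> cxy sxy; elim: a => [|a IHa]; first by rewrite expr1.
move=> ya2x yxb; apply: IHa => //.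
have yax_xpow c : y ^+ a.+1 * x ^+ c.+1 = y ^+ a.+1 * x.
  elim: c => [|c IHc]; first by rewrite expr1.
  have yax_y : y ^+ a.+1 * x ^+ c.+1 * y = 0.
    have cyx : x ^+ c.+1 * y = y * x ^+ c.+1 by apply/esym/commrX/commr_sym.
    by rewrite -mulrA cyx mulrA -exprSr [x ^+ _]exprS mulrA ya2x mul0r.
  by rewrite -{}IHc -[RHS]mulr1 -sxy mulrDr yax_y addr0 -mulrA -exprSr.
by rewrite -(yax_xpow b) exprSr -mulrA yxb mulr0.
Qed.
End Idempotents.

Section RootsOfUnityFilter.
Context {k : fieldType} {n : nat} {z : k}.
Hypothesis prim : n.-primitive_root z.

Lemma prim_exprX_order j : (z ^+ j) ^+ n = 1.
Proof. by rewrite exprAC (prim_expr_order prim) expr1n. Qed.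

Lemma sum_prim_root_expr e :
  \sum_(j < n) (z ^+ e) ^+ j = if (n %| e)%N then n%:R else 0.
Proof.
have [n_dvd_e | n_ndvd_e] := ifPn.
  have -> : z ^+ e = 1 by apply/eqP; rewrite -(prim_order_dvd prim).
  by under eq_bigr do rewrite expr1n; rewrite sumr_const card_ord.
have ze_neq1 : z ^+ e - 1 != 0 by rewrite subr_eq0 -(prim_order_dvd prim).
have := subrX1 (z ^+ e) n.
rewrite prim_exprX_order subrr => /esym/eqP.
by rewrite mulf_eq0 (negbTE ze_neq1) => /eqP.
Qed.

(* Fourier inversion: weight the j-th equation by (z^(n-l))^j = z^(-lj)
   and sum over j. *)
Lemma prim_root_filter (V : lmodType k) (T : nat -> V) (K : V) :
    (forall j, (j < n)%N -> \sum_(i < n.+1) (z ^+ j) ^+ i *: T i = K) ->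
  forall l, (0 < l < n)%N -> T l = 0.
Proof.
move=> hT l hl.
have dvd_shift i : (i <= n)%N -> (n %| n - l + i)%N = (i == l).
  move=> le_in; apply/idP/eqP => [/dvdnP [[|[|q]] hq] | ->]; try lia.
  by rewrite subnK ?dvdnn //; lia.
have : \sum_(j < n) (z ^+ (n - l)) ^+ j *: (\sum_(i < n.+1) (z ^+ j) ^+ i *: T i - K) = 0.
  by apply: big1 => j _; rewrite hT // subrr scaler0.
under eq_bigr do rewrite scalerBr scaler_sumr.
have nK : (n %| n - l)%N = false.
  by rewrite -[(n - l)%N]addn0 dvd_shift //; lia.
rewrite sumrB exchange_big /= -scaler_suml sum_prim_root_expr nK scale0r subr0.
under eq_bigr => i _.
  under eq_bigr do rewrite scalerA [X in _ * X]exprAC -exprMn -exprD.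
  rewrite -scaler_suml sum_prim_root_expr dvd_shift ?leq_ord //.
  over.
have l_lt : (l < n.+1)%N by lia.
rewrite (bigD1 (Ordinal l_lt)) //= eqxx big1 ?addr0.
  by move/eqP; rewrite scaler_eq0 (negbTE (prim_root_natf_neq0 prim)) => /eqP.
by move=> i ne_il; rewrite ifN ?scale0r //; apply: contra ne_il => /eqP eq_il; apply/eqP/val_inj.
Qed.

Section TwistedPowers.
Context {A : algType k} {x y K : A}.
Hypotheses (cxy : GRing.comm x y)
  (hK : forall j, (j < n)%N -> (z ^+ j *: x + y) ^+ n = K).

Lemma twisted_pow_binomial_eq0 l :
  (0 < l < n)%N -> y ^+ (n - l) * x ^+ l *+ 'C(n, l) = 0.
Proof.
apply: (@prim_root_filter A (fun i => y ^+ (n - i) * x ^+ i *+ 'C(n, i)) K).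
move=> j /hK <-; rewrite addrC exprDn_comm; last first.
  by rewrite /GRing.comm -scalerAr -scalerAl cxy.
by apply: eq_bigr => i _; rewrite exprZn -scalerAr scalerMnr.
Qed.

Lemma twisted_pow_eq0 : (1 < n)%N -> y ^+ n.-1 * x = 0 /\ y * x ^+ n.-1 = 0.
Proof.
move=> n_gt1; have n_neq0 := prim_root_natf_neq0 prim.
have nat_cancel (u : A) : u *+ n = 0 -> u = 0.
  by rewrite -scaler_nat => /eqP; rewrite scaler_eq0 (negbTE n_neq0) => /eqP.
split; apply: nat_cancel.
  have := @twisted_pow_binomial_eq0 1; rewrite bin1 expr1 subn1; apply; lia.
have := @twisted_pow_binomial_eq0 n.-1.
have -> : (n - n.-1 = 1)%N by lia.
have -> : 'C(n, n.-1) = n by rewrite -subn1 bin_sub ?bin1 //; lia.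
by rewrite expr1; apply; lia.
Qed.
End TwistedPowers.

Section Idempotency.
Context {A : algType k}.
Hypothesis n_gt1 : (1 < n)%N.

Lemma twisted_pow_idempotent (x : A) :
  (forall j, (j < n)%N -> (z ^+ j *: x + (1 - x)) ^+ n = 1) -> x * x = x.
Proof.
move=> hx; have cx : GRing.comm x (1 - x).
  by rewrite /GRing.comm mulrBr mulrBl mulr1 mul1r.
have [m def_n] : exists m, n = m.+2 by exists (n - 2)%N; lia.
have [] := twisted_pow_eq0 cx hx n_gt1; rewrite def_n /= => yx ynx.
have := comm_sum1_mulr_eq0 cx (subrKC x 1) yx ynx.
by rewrite mulrBl mul1r => /eqP; rewrite subr_eq0 => /eqP.
Qed.

Lemma commuting_idempotents_mul_eq0 (e f : A) :
    e * e = e -> f * f = f -> e * f = f * e ->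
    (forall t, (t < n)%N -> (1 + (z ^+ t - 1) *: e + (z - 1) *: f) ^+ n = 1) ->
  e * f = 0.
Proof.
move=> ee ff cef hS; set E := e * f.
have eE : e * E = E by rewrite /E mulrA ee.
have Ee : E * e = E by rewrite /E -mulrA -cef mulrA ee.
have fE : f * E = E by rewrite /E cef mulrA ff.
have Ef : E * f = E by rewrite /E -mulrA ff.
have EE : E * E = E by rewrite {1}/E -mulrA fE.
have [m def_n] : exists m, n = m.+2 by exists (n - 2)%N; lia.
have En : E ^+ n = E by rewrite def_n idempotent_expS.
pose S t := 1 + (z ^+ t - 1) *: e + (z - 1) *: f.
have ES t : E * S t = z ^+ t *: E + (z - 1) *: E.
  rewrite /S !mulrDr mulr1 -!scalerAr Ee Ef scalerBl scale1r.
  by rewrite addrCA subrr addr0.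
have cES t : GRing.comm E (S t).
  rewrite /GRing.comm /S !mulrDr !mulrDl mulr1 mul1r -!scalerAr -!scalerAl.
  by rewrite Ee Ef eE fE.
have hK t : (t < n)%N -> (z ^+ t *: E + (z - 1) *: E) ^+ n = E.
  by move=> /hS St; rewrite -ES exprMn_comm // St mulr1.
have cE : GRing.comm E ((z - 1) *: E) by rewrite /GRing.comm -scalerAr -scalerAl.
have [_] := twisted_pow_eq0 cE hK n_gt1.
have z_neq1 : z - 1 != 0.
  by rewrite subr_eq0 -[z]expr1 -(prim_order_dvd prim) dvdn1 gtn_eqF.
rewrite -scalerAl -exprS prednK ?En; last lia.
by move/eqP; rewrite scaler_eq0 (negbTE z_neq1) => /eqP.
Qed.
End Idempotency.
End RootsOfUnityFilter.

Lemma exp_ffunE (aT : finType) (R : pzSemiRingType) (f : {ffun aT -> R}) m x :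
  (f ^+ m) x = f x ^+ m.
Proof. by elim: m => [|m IHm]; rewrite ?expr0 ?ffunE // !exprS ffunE IHm. Qed.

Section UnitaryPowerMaps.
Context {k : fieldType} {A : algType k} {d n : nat} {z : k}.
Hypotheses (prim : n.-primitive_root z) (n_gt1 : (1 < n)%N).
Context {phi : {ffun 'I_d -> k} -> A}.
Hypotheses (phiD : forall a b, phi (a + b) = phi a + phi b)
  (phiZ : forall (c : k) (a : {ffun 'I_d -> k}), phi [ffun i => c * a i] = c *: phi a)
  (phi1 : phi 1 = 1)
  (phiX : forall a, a ^+ n = 1 -> phi a ^+ n = 1).

Let P i := phi [ffun l => (l == i)%:R].

Lemma phi_sum_coord a : phi a = \sum_i a i *: P i.
Proof.
have phi0 : phi 0 = 0 by apply: (addrI (phi 0)); rewrite -phiD !addr0.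
have Ea : a = \sum_i [ffun l => a i * (l == i)%:R].
  apply/ffunP => l; rewrite sum_ffunE (bigD1 l) //= big1 ?ffunE ?eqxx ?mulr1 ?addr0 //.
  by move=> i ne_il; rewrite ffunE eq_sym (negbTE ne_il) mulr0.
rewrite {1}Ea (big_morph phi phiD phi0); apply: eq_bigr => i _.
by rewrite -phiZ; congr phi; apply/ffunP => l; rewrite !ffunE.
Qed.

Lemma phi_one_add_pow (c : 'I_d -> k) :
  (forall i, (1 + c i) ^+ n = 1) -> (1 + \sum_i c i *: P i) ^+ n = 1.
Proof.
move=> hc; have <- : phi [ffun i => 1 + c i] = 1 + \sum_i c i *: P i.
  rewrite -phi1 !phi_sum_coord -big_split; apply: eq_bigr => i _.
  by rewrite !ffunE scalerDl.
by apply: phiX; apply/ffunP => i; rewrite exp_ffunE !ffunE hc.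
Qed.

Let Q (S : {set 'I_d}) := \sum_(i in S) P i.

Lemma sum_P_idempotent S : Q S * Q S = Q S.
Proof.
apply: (twisted_pow_idempotent prim n_gt1) => j _.
pose c i := if i \in S then z ^+ j - 1 else 0.
have sum_c : \sum_i c i *: P i = (z ^+ j - 1) *: Q S.
  rewrite scaler_sumr [RHS]big_mkcond; apply: eq_bigr => i _.
  by rewrite /c; case: ifP; rewrite ?scale0r.
have <- : 1 + \sum_i c i *: P i = z ^+ j *: Q S + (1 - Q S).
  by rewrite sum_c scalerBl scale1r addrCA addrA.
apply: phi_one_add_pow => i; rewrite /c; case: ifP => _.
  by rewrite subrKC (prim_exprX_order prim).
by rewrite addr0 expr1n.
Qed.

Lemma P_idempotent i : P i * P i = P i.
Proof. by have := sum_P_idempotent [set i]; rewrite /Q big_set1. Qed.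

Lemma P_comm i i' : i != i' -> P i * P i' = P i' * P i.
Proof.
move=> ne_ii'; apply: idempotent_addr_comm; rewrite ?P_idempotent //.
have := sum_P_idempotent [set i; i'].
by rewrite /Q big_setU1 ?big_set1 ?in_set1 //=.
Qed.

Lemma P_orth i i' : i != i' -> P i * P i' = 0.
Proof.
move=> ne_ii'; apply: (commuting_idempotents_mul_eq0 prim n_gt1).
- exact: P_idempotent.
- exact: P_idempotent.
- exact: P_comm.
move=> t _; pose c l := if l == i then z ^+ t - 1 else if l == i' then z - 1 else 0.
have <- : 1 + \sum_l c l *: P l = 1 + (z ^+ t - 1) *: P i + (z - 1) *: P i'.
  have ne_i'i : i' != i by rewrite eq_sym.
  rewrite -addrA (bigD1 i) // (bigD1 i') // big1; last first.
    by move=> l /andP [ne_li ne_li']; rewrite /c (negbTE ne_li) (negbTE ne_li') scale0r.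
  by rewrite /c eqxx (negbTE ne_i'i) eqxx /= addr0.
apply: phi_one_add_pow => l; rewrite /c.
case: ifP => _; first by rewrite subrKC (prim_exprX_order prim).
case: ifP => _; first by rewrite subrKC -[z]expr1 (prim_exprX_order prim).
by rewrite addr0 expr1n.
Qed.

Lemma phi_mul a b : phi (a * b) = phi a * phi b.
Proof.
rewrite !phi_sum_coord mulr_suml; apply: eq_bigr => i _.
rewrite mulr_sumr (bigD1 i) //= big1 ?addr0.
  by rewrite ffunE -scalerAl -scalerAr scalerA P_idempotent.
by move=> j ne_ji; rewrite -scalerAl -scalerAr P_orth ?scaler0 // eq_sym.
Qed.
End UnitaryPowerMaps.

Theorem theoremA (k : fieldType) (d m n : nat)
  (phi : {ffun 'I_d -> k} -> 'M[k]_m)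
  (hd : (0 < d)%N) (hn : (2 < n)%N)
  (hroot : exists z : k, n.-primitive_root z)
  (hlin : klinear phi)
  (h1 : phi 1 = 1%:M)
  (hpow : forall a : {ffun 'I_d -> k}, a ^+ n = 1 -> (phi a) ^+ n = 1%:M) :
  phi 1 = 1%:M /\ (forall a b, phi (a * b) = phi a *m phi b).
Proof.
split=> // a b; case: hlin => phiD phiZ.
(* 'M_m is a k-algebra only for m > 0; 'M_0 is trivial. *)
case: m phi h1 hpow phiD phiZ => [|m] phi h1 hpow phiD phiZ.
  by apply/matrixP => [[]].
have [z prim] := hroot.
exact: (phi_mul prim (ltnW hn) phiD phiZ h1 hpow).
Qed.
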